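(* Let $F:\mathbb C^n\to\mathbb C^n$ be a square system of polynomials with real coefficients and let $I=(I_1,\dots,I_n)\in\mathbb{IC}^n$ be a strong interval approximate zero of $F$ for which there exist $x\in I$ and an invertible $Y\in\mathbb C^{n\times n}$ with $K_{x,Y}(I)\subset I$, $\sqrt2\,\lVert\mathbf 1_n-Y\cdot\square\mathrm JF(I)\rVert_\infty<1$ and $\{\bar z: z\in K_{x,Y}(I)\}\subset I$. If $\mathrm{Re}(I)>0$ (i.e., the real-part interval of every coordinate $I_k$ consists of positive numbers), then the unique zero of $F$ in $I$ is real and has all coordinates positive.
   Context: $\mathbb{IR}$ is the set of compact real intervals $[a,b]$, with operations $X\circ Y=\{x\circ y: x\in X,y\in Y\}$ for $\circ\in\{+,-,\cdot,/\}$ ($0\notin Y$ for division). $\mathbb{IC}=\{X+iY: X,Y\in\mathbb{IR}\}$ is the set of rectangular complex intervals, where $X+iY=\{x+iy:x\in X,y\in Y\}$ (so $\mathrm{Re}(X+iY)=X$), with operations defined for $I=X+iY$, $J=W+iZ$ by $I\pm J=(X\pm W)+i(Y\pm Z)$, $I\cdot J=(X W-YZ)+i(XZ+YW)$, $I/J=\frac{XW+YZ}{WW+ZZ}+i\frac{YW-XZ}{WW+ZZ}$. Operations on $\mathbb{IC}^n$ are componentwise; for an interval matrix $A=(A_{i,j})\in\mathbb{IC}^{n\times n}$ and $I\in\mathbb{IC}^n$, $A\cdot I:=\sum_{j=1}^n I_j\cdot(A_{1,j},\dots,A_{n,j})^T$. A point $x\in\mathbb C^n$ is identified with the degenerate interval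 vector $[\mathrm{Re}\,x,\mathrm{Re}\,x]+i[\mathrm{Im}\,x,\mathrm{Im}\,x]$. An interval enclosure of $F:\mathbb C^n\to\mathbb C^m$ is a map $\square F:\mathbb{IC}^n\to\mathbb{IC}^m$ with $\{F(x):x\in I\}\subseteq\square F(I)$ for all $I$; $\square F$ and $\square\mathrm JF$ denote fixed interval enclosures of $F$ and its Jacobian $\mathrm JF$. For $A\in\mathbb{IC}^{n\times n}$, $\lVert A\rVert_\infty:=\max_{B\in A}\max_{v\ne0}\lVert Bv\rVert_\infty/\lVert v\rVert_\infty$. The Krawczyk operator is $K_{x,Y}(I):=x-Y\cdot\square F(x)+(\mathbf 1_n-Y\cdot\square\mathrm JF(I))(I-x)$. $I$ is a strong interval approximate zero of $F$ if there exist $x\in I$ and invertible $Y$ with $K_{x,Y}(I)\subset I$ and $\sqrt2\,\lVert\mathbf 1_n-Y\cdot\square\mathrm JF(I)\rVert_\infty<1$; such an $I$ contains exactly one zero of $F$. *)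

From HB Require Import structures.
From mathcomp Require Import all_boot all_order all_algebra.
From mathcomp Require Import complex.
From mathcomp Require Import mpoly.
From mathcomp Require Import reals.
Set Implicit Arguments. Unset Strict Implicit. Unset Printing Implicit Defensive.
Import Order.TTheory GRing.Theory Num.Theory.
Local Open Scope ring_scope.

Section Intervals.
Variable R : rcfType.

Record itv := Itv { lo : R; hi : R }.

Definition itv_wf (X : itv) := lo X <= hi X.
Definition in_itv (x : R) (X : itv) := lo X <= x <= hi X.

Definition iadd (X Y : itv) := Itv (lo X + lo Y) (hi X + hi Y).
Definition isub (X Y : itv) := Itv (lo X - hi Y) (hi X - lo Y).
Definition imul (X Y : itv) :=
  let p1 := lo X * lo Y in let p2 := lo X * hi Y in
  let p3 := hi X * lo Y in let p4 := hi X * hi Y in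
  Itv (Num.min (Num.min p1 p2) (Num.min p3 p4))
      (Num.max (Num.max p1 p2) (Num.max p3 p4)).
Definition ipt (x : R) := Itv x x.

Record citv := CItv { cre : itv; cim : itv }.

Definition citv_wf (I : citv) := itv_wf (cre I) /\ itv_wf (cim I).
Definition in_citv (z : R[i]) (I : citv) :=
  in_itv (complex.Re z) (cre I) /\ in_itv (complex.Im z) (cim I).

Definition cadd (I J : citv) := CItv (iadd (cre I) (cre J)) (iadd (cim I) (cim J)).
Definition csub (I J : citv) := CItv (isub (cre I) (cre J)) (isub (cim I) (cim J)).
Definition cmul (I J : citv) :=
  CItv (isub (imul (cre I) (cre J)) (imul (cim I) (cim J)))
       (iadd (imul (cre I) (cim J)) (imul (cim I) (cre J))).
Definition cpt (z : R[i]) := CItv (ipt (complex.Re z)) (ipt (complex.Im z)).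

Variable n : nat.
Definition civec := 'I_n -> citv.
Definition cimat := 'I_n -> 'I_n -> citv.

Definition in_civec (z : 'I_n -> R[i]) (I : civec) := forall k, in_citv (z k) (I k).
Definition civec_wf (I : civec) := forall k, citv_wf (I k).
Definition in_cimat (B : 'M[R[i]]_n) (A : cimat) := forall i j, in_citv (B i j) (A i j).

Definition vpt (z : 'I_n -> R[i]) : civec := fun k => cpt (z k).
Definition mpt (B : 'M[R[i]]_n) : cimat := fun i j => cpt (B i j).

Definition vadd (I J : civec) : civec := fun k => cadd (I k) (J k).
Definition vsub (I J : civec) : civec := fun k => csub (I k) (J k).
Definition msub (A B : cimat) : cimat := fun i j => csub (A i j) (B i j).

Definition czero := cpt 0.
Definition mvmul (A : cimat) (I : civec) : civec :=
  fun i => \big[cadd/czero]_(j < n) cmul (I j) (A i j).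
Definition mmmul (A B : cimat) : cimat :=
  fun i j => mvmul A (fun k => B k j) i.

Definition civec_sub (K I : civec) :=
  forall z, in_civec z K -> in_civec z I.

Definition cmod (z : R[i]) : R := Num.sqrt (complex.Re z ^+ 2 + complex.Im z ^+ 2).
Definition vnorm_inf (v : 'I_n -> R[i]) : R := \big[Num.max/0]_(k < n) cmod (v k).
Definition mapply (B : 'M[R[i]]_n) (v : 'I_n -> R[i]) : 'I_n -> R[i] :=
  fun i => \sum_(j < n) B i j * v j.
(* c = ||A||_oo := max_{B in A} max_{v <> 0} ||Bv||_oo / ||v||_oo,
   i.e. c is an upper bound of these quotients and is attained *)
Definition imat_norm_is (A : cimat) (c : R) :=
  (forall B v, in_cimat B A -> (exists k, v k != 0) ->
     vnorm_inf (mapply B v) / vnorm_inf v <= c) /\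
  (exists B v, [/\ in_cimat B A, (exists k, v k != 0) &
     vnorm_inf (mapply B v) / vnorm_inf v = c]).

Definition polyF (P : 'I_n -> {mpoly R[n]}) (z : 'I_n -> R[i]) : 'I_n -> R[i] :=
  fun i => (map_mpoly (real_complex R) (P i)).@[z].
Definition polyJF (P : 'I_n -> {mpoly R[n]}) (z : 'I_n -> R[i]) : 'M[R[i]]_n :=
  \matrix_(i, j) (map_mpoly (real_complex R) (mderiv j (P i))).@[z].

Definition is_enclosure (f : ('I_n -> R[i]) -> 'I_n -> R[i]) (bF : civec -> civec) :=
  forall I z, in_civec z I -> in_civec (f z) (bF I).
Definition is_mat_enclosure (f : ('I_n -> R[i]) -> 'M[R[i]]_n) (bJ : civec -> cimat) :=
  forall I z, in_civec z I -> in_cimat (f z) (bJ I).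

Definition krawczyk (bF : civec -> civec) (bJ : civec -> cimat)
    (x : 'I_n -> R[i]) (Y : 'M[R[i]]_n) (I : civec) : civec :=
  vadd (vsub (vpt x) (mvmul (mpt Y) (bF (vpt x))))
       (mvmul (msub (mpt 1%:M) (mmmul (mpt Y) (bJ I))) (vsub I (vpt x))).

End Intervals.

(* Write G v = v - Y F(v) for the Newton map.  Applying the mean value theorem separately to
   the real and to the imaginary part of each component of F gives F(v) - F(w) = M (v - w) with
   M in the rectangular enclosure JF(I), for all v, w in I.  Hence
   G v = x - Y F(x) + (1 - Y M)(v - x) lies in K_{x,Y}(I), which is contained in I, and
   G v - G w = (1 - Y M)(v - w), so G is a contraction of the box I with constant
   c <= sqrt 2 c < 1.  Its fixed point, the limit of the iterates of G, is the unique zero of F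
   in I since Y is invertible.  As F has real coefficients, the conjugate of this zero is again a
   zero, and it lies in I because the zero lies in K_{x,Y}(I); by uniqueness the zero is real,
   and its coordinates are positive since Re(I) > 0. *)

From Pilot Require Import Defs.
From HB Require Import structures.
From mathcomp Require Import all_boot all_order all_algebra.
From mathcomp Require Import complex.
From mathcomp Require Import mpoly.
From mathcomp Require Import reals.
From mathcomp Require Import polyrcf.
From mathcomp Require Import boolp classical_sets.
From mathcomp Require Import lra ring.
(* Re-import so that [Defs.in_itv] shadows the interval library's [in_itv]. *)
Import Defs.
Set Implicit Arguments. Unset Strict Implicit. Unset Printing Implicit Defensive.
Import Order.TTheory GRing.Theory Num.Theory.
Local Open Scope ring_scope.

Section IntervalArithmetic.
Variable R : rcfType.
Local Notation C := R[i].

Lemma ReM (z w : C) :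
  complex.Re (z * w) = complex.Re z * complex.Re w - complex.Im z * complex.Im w.
Proof. by case: z w => a b [c d]. Qed.

Lemma ImM (z w : C) :
  complex.Im (z * w) = complex.Re z * complex.Im w + complex.Im z * complex.Re w.
Proof. by case: z w => a b [c d]. Qed.

Lemma in_iadd (X Y : itv R) x y :
  in_itv x X -> in_itv y Y -> in_itv (x + y) (iadd X Y).
Proof. by rewrite /in_itv /= => /andP[? ?] /andP[? ?]; apply/andP; split; lra. Qed.

Lemma in_isub (X Y : itv R) x y :
  in_itv x X -> in_itv y Y -> in_itv (x - y) (isub X Y).
Proof. by rewrite /in_itv /= => /andP[? ?] /andP[? ?]; apply/andP; split; lra. Qed.

(* [x * y] is bilinear, so on the box [X] x [Y] it is bounded by its values at the corners. *)
Lemma in_imul (X Y : itv R) x y :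
  in_itv x X -> in_itv y Y -> in_itv (x * y) (imul X Y).
Proof.
rewrite /in_itv /imul /= => xX yY.
have between (a b u v : R) : a <= u <= b -> v * a <= v * u <= v * b \/ v * b <= v * u <= v * a.
  move=> /andP[au ub]; have [v0|v0] := lerP 0 v.
    by left; rewrite !ler_wpM2l.
  by right; rewrite !ler_wnM2l // ltW.
move: (between _ _ _ x yY) (between _ _ _ (lo Y) xX) (between _ _ _ (hi Y) xX).
rewrite ![lo Y * _]mulrC ![hi Y * _]mulrC.
by move=> [] /andP[h h'] [] /andP[h1 h1'] [] /andP[h2 h2'];
  rewrite !ge_min !le_max ?(le_trans h1 h) ?(le_trans h2 h) ?(le_trans h h1')
    ?(le_trans h h2') ?(le_trans h1 h') ?(le_trans h2 h') ?(le_trans h' h1')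
    ?(le_trans h' h2') ?orbT.
Qed.

Lemma in_cadd (I J : citv R) (z w : C) :
  in_citv z I -> in_citv w J -> in_citv (z + w) (cadd I J).
Proof. by move=> [? ?] [? ?]; split; rewrite /= raddfD; apply: in_iadd. Qed.

Lemma in_csub (I J : citv R) (z w : C) :
  in_citv z I -> in_citv w J -> in_citv (z - w) (csub I J).
Proof. by move=> [? ?] [? ?]; split; rewrite /= raddfB; apply: in_isub. Qed.

Lemma in_cmul (I J : citv R) (z w : C) :
  in_citv z I -> in_citv w J -> in_citv (z * w) (cmul I J).
Proof.
move=> [? ?] [? ?]; split; rewrite /= ?ReM ?ImM.
  by apply: in_isub; apply: in_imul.
by apply: in_iadd; apply: in_imul.
Qed.

Lemma in_cpt (z : C) : in_citv z (cpt z).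
Proof. by split; rewrite /in_itv /= lexx. Qed.

Lemma in_big_cadd m (F : 'I_m -> C) (J : 'I_m -> citv R) :
  (forall j, in_citv (F j) (J j)) ->
  in_citv (\sum_(j < m) F j) (\big[@cadd R/czero R]_(j < m) J j).
Proof.
move=> FJ; apply: (big_rec2 (fun s I => in_citv s I)); first exact: in_cpt.
by move=> j z I _; apply: in_cadd.
Qed.

Variable n : nat.

Lemma in_vpt (v : 'I_n -> C) : in_civec v (vpt v).
Proof. by move=> i; apply: in_cpt. Qed.

Lemma in_mpt (B : 'M[C]_n) : in_cimat B (mpt B).
Proof. by move=> i j; apply: in_cpt. Qed.

Lemma in_vadd (U V : civec R n) u v :
  in_civec u U -> in_civec v V -> in_civec (fun i => u i + v i) (vadd U V).
Proof. by move=> uU vV i; apply: in_cadd. Qed.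

Lemma in_vsub (U V : civec R n) u v :
  in_civec u U -> in_civec v V -> in_civec (fun i => u i - v i) (vsub U V).
Proof. by move=> uU vV i; apply: in_csub. Qed.

Lemma in_msub (A A' : cimat R n) (B B' : 'M[C]_n) :
  in_cimat B A -> in_cimat B' A' -> in_cimat (B - B') (msub A A').
Proof. by move=> BA BA' i j; rewrite !mxE; apply: in_csub. Qed.

Lemma in_mvmul (A : cimat R n) (V : civec R n) B v :
  in_cimat B A -> in_civec v V -> in_civec (mapply B v) (mvmul A V).
Proof.
move=> BA vV i; rewrite /mapply; under eq_bigr do rewrite mulrC.
by apply: in_big_cadd => j; apply: in_cmul.
Qed.

Lemma in_mmmul (A A' : cimat R n) (B B' : 'M[C]_n) :
  in_cimat B A -> in_cimat B' A' -> in_cimat (B *m B') (mmmul A A').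
Proof.
move=> BA BA' i j; rewrite mxE.
by apply: (in_mvmul (v := fun k => B' k j)) => // k; apply: BA'.
Qed.

Lemma in_krawczyk (bF : civec R n -> civec R n) (bJ : civec R n -> cimat R n)
    x Y (I : civec R n) (Fx v : 'I_n -> C) (M : 'M[C]_n) :
  in_civec Fx (bF (vpt x)) -> in_civec v I -> in_cimat M (bJ I) ->
  in_civec (fun i => x i - mapply Y Fx i + mapply (1%:M - Y *m M) (fun j => v j - x j) i)
    (krawczyk bF bJ x Y I).
Proof.
move=> FxF vI MJ; apply: in_vadd.
  by apply: in_vsub; [apply: in_vpt | apply: in_mvmul; first exact: in_mpt].
apply: in_mvmul; last by apply: in_vsub => //; apply: in_vpt.
by apply: in_msub; [exact: in_mpt | apply: in_mmmul => //; exact: in_mpt].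
Qed.

End IntervalArithmetic.

Section Norms.
Variable R : rcfType.
Local Notation C := R[i].

Lemma cmod_normc (z : C) : cmod z = Normc.normc z.
Proof. by case: z. Qed.

Lemma cmod_ge0 (z : C) : 0 <= cmod z.
Proof. exact: sqrtr_ge0. Qed.

Lemma cmod_eq0 (z : C) : (cmod z == 0) = (z == 0).
Proof.
apply/eqP/eqP => [|->]; first by rewrite cmod_normc => /Normc.eq0_normc.
by rewrite cmod_normc Normc.normc0.
Qed.

Lemma cmod0 : cmod (0 : C) = 0.
Proof. by apply/eqP; rewrite cmod_eq0. Qed.

Lemma cmodD (z w : C) : cmod (z + w) <= cmod z + cmod w.
Proof. by rewrite !cmod_normc; apply: le_normcD. Qed.

Lemma cmodN (z : C) : cmod (- z) = cmod z.
Proof. by rewrite !cmod_normc normcN. Qed.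

Lemma ler_Re_cmod (z : C) : `|complex.Re z| <= cmod z.
Proof. by rewrite /cmod -sqrtr_sqr ler_sqrt ?addr_ge0 ?sqr_ge0 // lerDl sqr_ge0. Qed.

Lemma ler_Im_cmod (z : C) : `|complex.Im z| <= cmod z.
Proof. by rewrite /cmod -sqrtr_sqr ler_sqrt ?addr_ge0 ?sqr_ge0 // lerDr sqr_ge0. Qed.

Lemma cmod_le_ReIm (z : C) : cmod z <= `|complex.Re z| + `|complex.Im z|.
Proof.
have ReIm_ge0 : 0 <= `|complex.Re z| + `|complex.Im z| by rewrite addr_ge0.
rewrite /cmod -(ger0_norm ReIm_ge0) -(sqrtr_sqr (_ + _)) ler_sqrt ?sqr_ge0 //.
rewrite sqrrD !real_normK ?num_real // -addrA lerD2l lerDr.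
by rewrite mulrn_wge0 // mulr_ge0.
Qed.

Variable n : nat.
Implicit Types u v w : 'I_n -> C.

Lemma vnorm_inf_ge0 v : 0 <= vnorm_inf v.
Proof.
by apply: (big_ind (fun x => 0 <= x)) => // [a b a0 b0|k _]; rewrite ?le_max ?a0 ?cmod_ge0.
Qed.

Lemma cmod_le_vnorm_inf v k : cmod (v k) <= vnorm_inf v.
Proof. by rewrite /vnorm_inf (bigD1 k) //= le_max lexx. Qed.

Lemma vnorm_inf_le v b : 0 <= b -> (forall k, cmod (v k) <= b) -> vnorm_inf v <= b.
Proof.
by move=> b0 vb; apply: (big_ind (fun x => x <= b)) => // a c ab cb; rewrite ge_max ab cb.
Qed.

Lemma vnorm_inf_le0 v : vnorm_inf v <= 0 -> v = (fun _ => 0).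
Proof.
move=> v0; apply/funext => k; apply/eqP; rewrite -cmod_eq0 eq_le cmod_ge0 andbT.
exact: le_trans (cmod_le_vnorm_inf v k) v0.
Qed.

Lemma vnorm_infD u w :
  vnorm_inf (fun k => u k + w k) <= vnorm_inf u + vnorm_inf w.
Proof.
apply: vnorm_inf_le => [|k]; first by rewrite addr_ge0 ?vnorm_inf_ge0.
by apply: le_trans (cmodD _ _) _; apply: lerD; apply: cmod_le_vnorm_inf.
Qed.

Lemma vnorm_infN v : vnorm_inf (fun k => - v k) = vnorm_inf v.
Proof. by apply: eq_bigr => k _; rewrite cmodN. Qed.

Lemma vnorm_infB u w :
  vnorm_inf (fun k => u k - w k) = vnorm_inf (fun k => w k - u k).
Proof. by rewrite -vnorm_infN; congr vnorm_inf; apply/funext => k; rewrite opprB. Qed.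

Lemma imat_norm_is_ge0 (A : cimat R n) c : imat_norm_is A c -> 0 <= c.
Proof. by move=> [_ [B [v [_ _ <-]]]]; rewrite divr_ge0 ?vnorm_inf_ge0. Qed.

Lemma imat_norm_isP (A : cimat R n) c B v :
  imat_norm_is A c -> in_cimat B A -> vnorm_inf (mapply B v) <= c * vnorm_inf v.
Proof.
move=> normA BA; have c0 := imat_norm_is_ge0 normA; case: normA => [cub _].
have [/existsP[k vk]|] := boolP [exists k, v k != 0].
  have v_gt0 : 0 < vnorm_inf v.
    by apply: lt_le_trans (cmod_le_vnorm_inf v k); rewrite lt_def cmod_eq0 vk cmod_ge0.
  by rewrite -ler_pdivrMr //; apply: cub => //; exists k.
rewrite negb_exists => /forallP v0.
apply: le_trans (mulr_ge0 c0 (vnorm_inf_ge0 v)); apply: vnorm_inf_le => // i.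
rewrite /mapply big1 ?cmod0 // => j _.
by move: (v0 j); rewrite negbK => /eqP->; rewrite mulr0.
Qed.

End Norms.

Lemma rmorph_meval n (S T : comNzRingType) (f : {rmorphism S -> T})
    (p : {mpoly S[n]}) (v : 'I_n -> S) :
  f p.@[v] = (map_mpoly f p).@[fun i => f (v i)].
Proof.
elim/mpolyind: p => [|c m p _ _ ih]; first by rewrite !(raddf0, meval0).
rewrite mevalD rmorphD /= ih raddfD /= mevalD map_mpolyZ map_mpolyX !mevalZ !mevalX.
by rewrite rmorphM rmorph_prod; congr (_ * _ + _); apply: eq_bigr => i _; rewrite rmorphXn.
Qed.

Section LinePoly.
Variables (K : comNzRingType) (n : nat) (x d : 'I_n -> K).

Fact line_poly_key : unit. Proof. by []. Qed.

(* The restriction of [Q] to the line [t |-> x + t d]; locked because unfolding [meval] during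
   unification is prohibitively slow. *)
Definition line_poly : {mpoly K[n]} -> {poly K} := locked_with line_poly_key
  (fun Q => (map_mpoly polyC Q).@[fun j => (x j)%:P + d j *: 'X]).

Lemma line_polyE Q : line_poly Q = (map_mpoly polyC Q).@[fun j => (x j)%:P + d j *: 'X].
Proof. by rewrite /line_poly unlock. Qed.

Lemma line_polyD P Q : line_poly (P + Q) = line_poly P + line_poly Q.
Proof. by rewrite !line_polyE raddfD mevalD. Qed.

Lemma line_polyM P Q : line_poly (P * Q) = line_poly P * line_poly Q.
Proof. by rewrite !line_polyE rmorphM mevalM. Qed.

Lemma line_polyC c : line_poly c%:MP = c%:P.
Proof. by rewrite line_polyE map_mpolyC mevalC. Qed.

Lemma line_polyX i : line_poly 'X_i = (x i)%:P + d i *: 'X.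
Proof. by rewrite line_polyE map_mpolyX mevalXU. Qed.

Lemma horner_line_poly Q t : (line_poly Q).[t] = Q.@[fun j => x j + t * d j].
Proof.
rewrite line_polyE -horner_evalE rmorph_meval.
have -> : map_mpoly (horner_eval t) (map_mpoly polyC Q) = Q.
  by apply/mpolyP => m; rewrite !mcoeff_map_mpoly /= horner_evalE hornerC.
by apply: meval_eq => j; rewrite /= horner_evalE hornerD hornerC hornerZ hornerX mulrC.
Qed.

Lemma deriv_line_poly Q :
  (line_poly Q)^`() = \sum_j line_poly (mderiv j Q) * (d j)%:P.
Proof.
pose chain P := (line_poly P)^`() = \sum_j line_poly (mderiv j P) * (d j)%:P.
have chainC c : chain c%:MP.
  by rewrite /chain line_polyC derivC big1 // => j _; rewrite mderivC line_polyC mul0r.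
have chainD P P' : chain P -> chain P' -> chain (P + P').
  rewrite /chain => dP dP'; rewrite line_polyD derivD dP dP' -big_split /=.
  by apply: eq_bigr => j _; rewrite mderivD line_polyD mulrDl.
have chainM P P' : chain P -> chain P' -> chain (P * P').
  rewrite /chain => dP dP'; rewrite line_polyM derivM dP dP' mulr_suml mulr_sumr -big_split /=.
  apply: eq_bigr => j _; rewrite mderivM line_polyD !line_polyM.
  by rewrite mulrDl -!mulrA [line_poly P' * _]mulrC [line_poly P * (_ * _)]mulrCA.
have chainX i : chain 'X_i.
  rewrite /chain line_polyX derivD derivC derivZ derivX add0r.
  rewrite (bigD1 i) //= big1 => [|j ji]; last first.
    by rewrite mderivX mnm1E eq_sym (negbTE ji) scale0r -(mpolyC0) line_polyC mul0r.
  rewrite mderivX mnm1E eqxx.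
  have -> : (U_(i) - U_(i))%MM = 0%MM by apply/mnmP => k; rewrite mnmBE mnm0E subnn.
  by rewrite mpolyX0 scale1r -mpolyC1 line_polyC mul1r addr0 alg_polyC.
have chainXn i k : chain ('X_i ^+ k).
  elim: k => [|k ihk]; first by rewrite expr0 -mpolyC1; apply: chainC.
  by rewrite exprS; apply: chainM.
elim/mpolyind: Q => [|c m p _ _ ih]; first by rewrite -mpolyC0; apply: chainC.
apply: chainD => //; rewrite -mul_mpolyC; apply: (chainM); first exact: chainC.
rewrite mpolyXE_id; apply: (big_ind chain) => [|P P'|j _]; last exact: chainXn.
  by rewrite -mpolyC1; apply: chainC.
exact: chainM.
Qed.

End LinePoly.

Section PolyDeriv.
Variable F : numFieldType.

Lemma deriv_eq0_polyC (q : {poly F}) : q^`() = 0 -> q = (q`_0)%:P.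
Proof.
move=> dq0; apply/polyP => -[|k]; rewrite coefC //=.
have /eqP := congr1 (fun p : {poly F} => p`_k) dq0.
by rewrite coef_deriv coef0 mulrn_eq0 => /eqP.
Qed.

Definition antideriv (q : {poly F}) : {poly F} :=
  \poly_(k < (size q).+1) (if k is k'.+1 then q`_k' / k%:R else 0).

Lemma deriv_antideriv q : (antideriv q)^`() = q.
Proof.
apply/polyP => k; rewrite coef_deriv coef_poly ltnS.
case: ltnP => [_|kq]; last by rewrite mul0rn nth_default.
by rewrite /= -[_ *+ k.+1]mulr_natr divfK // pnatr_eq0.
Qed.

Lemma horner_increment_eq (p q : {poly F}) :
  p^`() = q^`() -> p.[1] - p.[0] = q.[1] - q.[0].
Proof.
move=> dpq; have /deriv_eq0_polyC pq_cst : (p - q)^`() = 0 by rewrite derivB dpq subrr.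
have := congr1 (horner^~ 1) pq_cst; have := congr1 (horner^~ 0) pq_cst.
rewrite !hornerC !hornerD !hornerN => e0 e1.
by rewrite -[p.[1]](subrK q.[1]) -[p.[0]](subrK q.[0]) e1 e0; ring.
Qed.

Definition integral01 (q : {poly F}) : F := (antideriv q).[1] - (antideriv q).[0].

Lemma meval_increment n (Q : {mpoly F[n]}) (x d : 'I_n -> F) :
  Q.@[fun j => x j + d j] - Q.@[x] =
  \sum_j integral01 (line_poly x d (mderiv j Q)) * d j.
Proof.
pose A j := antideriv (line_poly x d (mderiv j Q)).
have -> : Q.@[fun j => x j + d j] - Q.@[x] = (line_poly x d Q).[1] - (line_poly x d Q).[0].
  rewrite !horner_line_poly; congr (_ - _); apply: meval_eq => j.
    by rewrite mul1r.
  by rewrite mul0r addr0.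
rewrite (@horner_increment_eq _ (\sum_j A j * (d j)%:P)).
  by rewrite !horner_sum -sumrB; apply: eq_bigr => j _; rewrite !hornerM !hornerC -mulrBl.
rewrite deriv_line_poly raddf_sum; apply: eq_bigr => j _.
by rewrite /= derivM derivC mulr0 addr0 deriv_antideriv.
Qed.

End PolyDeriv.

Section MeanValue.
Local Open Scope complex_scope.
Variable R : rcfType.
Local Notation C := R[i].

Section ScalarPart.
Variables (f : {additive C -> R}) (fZ : forall z r, f (z * r%:C) = f z * r).

Lemma horner_map_scalar (q : {poly C}) t : (map_poly f q).[t] = f q.[t%:C].
Proof.
rewrite (horner_coef_wide _ (size_poly _ _)) horner_coef raddf_sum.
apply: eq_bigr => k _; rewrite coef_map_id0 ?raddf0 //.
by rewrite -rmorphXn fZ.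
Qed.

Lemma deriv_map_scalar (q : {poly C}) : (map_poly f q)^`() = map_poly f q^`().
Proof.
by apply/polyP => k; rewrite coef_deriv !coef_map_id0 ?raddf0 // coef_deriv raddfMn.
Qed.

Lemma integral01_mvt_scalar (q : {poly C}) :
  exists2 t : R, 0 < t < 1 & f (integral01 q) = f q.[t%:C].
Proof.
have [t t01 mvt] := poly_mvt (map_poly f (antideriv q)) (@ltr01 R).
exists t; first by rewrite !(itvP t01).
move: mvt; rewrite subr0 mulr1 deriv_map_scalar deriv_antideriv !horner_map_scalar.
by rewrite -raddfB.
Qed.

End ScalarPart.

Lemma ReMr (z : C) (r : R) : complex.Re (z * r%:C) = complex.Re z * r.
Proof. by case: z => a b /=; rewrite mulr0 subr0. Qed.

Lemma ImMr (z : C) (r : R) : complex.Im (z * r%:C) = complex.Im z * r.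
Proof. by case: z => a b /=; rewrite mulr0 add0r. Qed.

Variable n : nat.

Lemma in_civec_segment (I : civec R n) (x z : 'I_n -> C) (t : R) :
  in_civec x I -> in_civec z I -> 0 <= t <= 1 ->
  in_civec (fun k => x k + (z k - x k) * t%:C) I.
Proof.
move=> xI zI /andP[t0 t1] k.
case: (xI k) (zI k) => [/andP[? ?] /andP[? ?]] [/andP[? ?] /andP[? ?]].
by split; rewrite /in_itv raddfD /= ?ReMr ?ImMr raddfB /=; apply/andP; split; nra.
Qed.

Lemma mderiv_map_mpoly (S T : nzRingType) (g : {additive S -> T}) i (p : {mpoly S[n]}) :
  mderiv i (map_mpoly g p) = map_mpoly g (mderiv i p).
Proof.
by apply/mpolyP => m; rewrite mcoeff_mderiv !mcoeff_map_mpoly mcoeff_mderiv raddfMn.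
Qed.

(* Each entry of [M] averages a partial derivative over the segment [[x, z]]; its real and
   imaginary parts are values of that derivative at (possibly different) points of [I]. *)
Lemma polyF_mean_value (P : 'I_n -> {mpoly R[n]}) (bJ : civec R n -> cimat R n)
    (I : civec R n) (x z : 'I_n -> C) :
  is_mat_enclosure (polyJF P) bJ -> in_civec x I -> in_civec z I ->
  exists M : 'M[C]_n, in_cimat M (bJ I) /\
    (fun i => polyF P z i - polyF P x i) = mapply M (fun j => z j - x j).
Proof.
move=> bJ_encl xI zI; pose d j := z j - x j.
pose Fc i := map_mpoly (real_complex R) (P i).
pose M := \matrix_(i, j) integral01 (line_poly x d (mderiv j (Fc i))).
exists M; split.
  move=> i j; rewrite mxE.
  have on_segment (g : {additive C -> R}) : (forall w r, g (w * r%:C) = g w * r) ->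
      exists2 p, in_civec p I & g (integral01 (line_poly x d (mderiv j (Fc i)))) =
                                 g (polyJF P p i j).
    move=> gZ.
    have [t /andP[t0 t1] ->] := integral01_mvt_scalar gZ (line_poly x d (mderiv j (Fc i))).
    exists (fun k => x k + d k * t%:C); first by apply: in_civec_segment; rewrite ?ltW.
    rewrite horner_line_poly mxE mderiv_map_mpoly; congr (g (meval _ _)).
    by apply/funext => k; rewrite mulrC.
  rewrite /in_citv; have [p1 p1I /= ->] := on_segment _ ReMr.
  have [p2 p2I /= ->] := on_segment _ ImMr.
  by split; [exact: (bJ_encl I p1 p1I i j).1 | exact: (bJ_encl I p2 p2I i j).2].
apply/funext => i; rewrite /polyF -/(Fc i).
have zE : (fun j => x j + d j) = z by apply/funext => j; rewrite /d addrC subrK.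
by rewrite -{1}zE meval_increment /mapply; apply: eq_bigr => j _; rewrite mxE.
Qed.

End MeanValue.

Section NewtonMap.
Variables (R : rcfType) (n : nat).
Local Notation C := R[i].
Variables (F : ('I_n -> C) -> 'I_n -> C) (Y : 'M[C]_n).

Definition newton_map (v : 'I_n -> C) : 'I_n -> C := fun i => v i - mapply Y (F v) i.

Lemma mapply_col (B : 'M[C]_n) v : \col_i mapply B v i = B *m \col_j v j.
Proof. by apply/matrixP => i k; rewrite !mxE; apply: eq_bigr => j _; rewrite mxE. Qed.

Lemma col_inj (u v : 'I_n -> C) : \col_i u i = \col_i v i -> u = v.
Proof.
by move=> uv; apply/funext => i; have := congr1 (fun A : 'cV[C]_n => A i 0) uv; rewrite !mxE.
Qed.

Lemma mapplyB (B : 'M[C]_n) u v i :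
  mapply B (fun j => u j - v j) i = mapply B u i - mapply B v i.
Proof. by rewrite /mapply -sumrB; apply: eq_bigr => j _; rewrite mulrBr. Qed.

Lemma newton_mapB v w (M : 'M[C]_n) :
  (fun i => F v i - F w i) = mapply M (fun j => v j - w j) ->
  (fun i => newton_map v i - newton_map w i) =
    mapply (1%:M - Y *m M) (fun j => v j - w j).
Proof.
move=> FM; apply: col_inj; rewrite mapply_col mulmxBl mul1mx -mulmxA -mapply_col -FM.
rewrite -mapply_col; apply/matrixP => i k; rewrite !mxE mapplyB /newton_map; ring.
Qed.

Lemma newton_map_fixE v : Y \in unitmx -> newton_map v = v <-> F v = (fun _ => 0).
Proof.
move=> Yunit; split => [Gv|Fv0]; last first.
  by apply/funext => i; rewrite /newton_map Fv0 /mapply big1 ?subr0 // => j _; rewrite mulr0.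
apply: col_inj; rewrite -[\col_j F v j](mulKmx Yunit) -mapply_col.
have -> : \col_i mapply Y (F v) i = 0.
  apply/matrixP => i k; rewrite !mxE; have := congr1 (fun u => u i) Gv.
  by rewrite /newton_map => /eqP; rewrite subr_eq addrC -subr_eq subrr eq_sym => /eqP.
by rewrite mulmx0; apply/matrixP => i k; rewrite !mxE.
Qed.

End NewtonMap.

Section KrawczykNewton.
Variables (R : rcfType) (n : nat) (P : 'I_n -> {mpoly R[n]}).
Variables (bF : civec R n -> civec R n) (bJ : civec R n -> cimat R n).
Variables (I : civec R n) (x : 'I_n -> R[i]) (Y : 'M[R[i]]_n).
Hypotheses (bF_encl : is_enclosure (polyF P) bF) (bJ_encl : is_mat_enclosure (polyJF P) bJ).
Hypothesis xI : in_civec x I.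

Local Notation G := (newton_map (polyF P) Y).

Lemma newton_map_in_krawczyk v : in_civec v I -> in_civec (G v) (krawczyk bF bJ x Y I).
Proof.
move=> vI; have [M [MJ FM]] := polyF_mean_value bJ_encl xI vI.
have := in_krawczyk Y (bF_encl (in_vpt x)) vI MJ; rewrite -(newton_mapB Y FM).
by congr in_civec; apply/funext => i; rewrite /= addrC subrK.
Qed.

Lemma newton_map_lipschitz c v w :
  imat_norm_is (msub (mpt 1%:M) (mmmul (mpt Y) (bJ I))) c -> in_civec v I -> in_civec w I ->
  vnorm_inf (fun i => G v i - G w i) <= c * vnorm_inf (fun i => v i - w i).
Proof.
move=> normc vI wI; have [M [MJ FM]] := polyF_mean_value bJ_encl wI vI.
rewrite (newton_mapB Y FM); apply: imat_norm_isP normc _.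
by apply: in_msub; [exact: in_mpt | apply: in_mmmul => //; exact: in_mpt].
Qed.

End KrawczykNewton.

Section Contraction.
Variable R : realType.

Lemma geometric_bound_le0 (c K N : R) :
  0 <= c < 1 -> (forall k, N <= K * c ^+ k) -> N <= 0.
Proof.
move=> /andP[c0 c1] NK; rewrite leNgt; apply/negP => N_gt0.
have K_ge0 : 0 <= K by have := NK 0%N; rewrite expr0 mulr1; lra.
have c_gt0 : 0 < c.
  rewrite lt_def c0 andbT; apply: contraTneq N_gt0 => c_eq0; rewrite -leNgt.
  by have := NK 1%N; rewrite c_eq0 expr1 mulr0.
pose h := c^-1 - 1; have h_gt0 : 0 < h by rewrite subr_gt0 invf_gt1.
have bernoulli k : 1 + k%:R * h <= (c ^+ k)^-1.
  have -> : (c ^+ k)^-1 = (1 + h) ^+ k by rewrite /h addrC subrK exprVn.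
  elim: k => [|k ih]; first by rewrite mul0r addr0 expr0.
  have hk_ge0 : 0 <= (1 + h) ^+ k by rewrite exprn_ge0 // addr_ge0 // ltW.
  have khh_ge0 : 0 <= k%:R * h * h by rewrite !mulr_ge0 // ltW.
  by rewrite exprS -natr1; nra.
have NhK k : N * (1 + k%:R * h) <= K.
  apply: le_trans (_ : N * (c ^+ k)^-1 <= K); first by rewrite ler_pM2l.
  by rewrite -ler_pdivlMr ?invr_gt0 ?exprn_gt0 // invrK.
pose k := Num.Def.archi_bound (K / (N * h)).
have := archi_boundP (divr_ge0 K_ge0 (mulr_ge0 (ltW N_gt0) (ltW h_gt0))).
rewrite -/k ltr_pdivrMr ?mulr_gt0 // => Kk; have := NhK k; nra.
Qed.

(* The lower envelopes [u k - T k] increase and the upper ones [u k + T k] decrease, so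
   the supremum of the former is squeezed between the two. *)
Lemma geometric_cauchy_lim (u : nat -> R) (D c a b : R) :
  0 <= c < 1 -> 0 <= D -> (forall k, a <= u k <= b) ->
  (forall k, `|u k.+1 - u k| <= D * c ^+ k) ->
  exists2 l, a <= l <= b & forall k, `|l - u k| <= D / (1 - c) * c ^+ k.
Proof.
move=> c01 D0 uab du; have /andP[c0 c1] := c01.
pose T k := D / (1 - c) * c ^+ k.
have T0 k : 0 <= T k by rewrite mulr_ge0 ?exprn_ge0 ?divr_ge0 // subr_ge0 ltW.
have TS k : T k - T k.+1 = D * c ^+ k.
  by rewrite /T exprS; field; rewrite subr_eq0 eq_sym lt_eqF.
have lowS k : u k - T k <= u k.+1 - T k.+1.
  by have := du k; have := TS k; rewrite ler_norml; lra.
have uppS k : u k.+1 + T k.+1 <= u k + T k.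
  by have := du k; have := TS k; rewrite ler_norml; lra.
have low_mono := homo_leq (f := fun k => u k - T k) (r := fun a b : R => a <= b)
  lexx le_trans lowS.
have upp_mono := homo_leq (f := fun k => u k + T k) (r := fun a b : R => b <= a)
  lexx (fun _ _ _ yx zy => le_trans zy yx) uppS.
have low_upp m k : u m - T m <= u k + T k.
  have [mk|/ltnW km] := leqP m k.
    by apply: le_trans (low_mono _ _ mk) _; have := T0 k; lra.
  by apply: le_trans (upp_mono _ _ km); have := T0 m; lra.
pose l := sup (range (fun k => u k - T k)).
have ub : has_ubound (range (fun k => u k - T k)).
  by exists (u 0%N + T 0%N) => _ [k _ <-]; apply: low_upp.
have low_l k : u k - T k <= l by apply: ub_le_sup => //; exists k.
have l_upp k : l <= u k + T k.
  by apply: ge_sup; [exists (u 0%N - T 0%N), 0%N | move=> _ [m _ <-]; apply: low_upp].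
exists l => [|k]; last by rewrite -/(T k) ler_norml; have := low_l k; have := l_upp k; lra.
apply/andP; split; rewrite -subr_le0; apply: (geometric_bound_le0 (K := D / (1 - c)) c01) => k;
  rewrite -/(T k); have /andP[auk ukb] := uab k.
  by have := low_l k; lra.
by have := l_upp k; lra.
Qed.

Variable n : nat.
Local Notation C := R[i].
Variables (I : civec R n) (c : R).
Hypothesis c01 : 0 <= c < 1.

Lemma geometric_cauchy_civec (s : nat -> 'I_n -> C) D :
  0 <= D -> (forall k, in_civec (s k) I) ->
  (forall k, vnorm_inf (fun j => s k.+1 j - s k j) <= D * c ^+ k) ->
  exists2 L, in_civec L I & forall k, vnorm_inf (fun j => L j - s k j) <= D / (1 - c) * c ^+ k *+ 2.
Proof.
move=> D0 sI ds; have /andP[c0 c1] := c01.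
have part_lim (f : C -> R) (J : citv R -> itv R) :
    {morph f : z w / z - w} -> (forall z, `|f z| <= cmod z) ->
    (forall z X, in_citv z X -> in_itv (f z) (J X)) ->
    exists l : 'I_n -> R, forall j, in_itv (l j) (J (I j)) /\
      forall k, `|l j - f (s k j)| <= D / (1 - c) * c ^+ k.
  move=> fB f_cmod fJ.
  have lim_j j : exists l, in_itv l (J (I j)) /\
                           forall k, `|l - f (s k j)| <= D / (1 - c) * c ^+ k.
    have df k : `|f (s k.+1 j) - f (s k j)| <= D * c ^+ k.
      rewrite -fB; apply: le_trans (f_cmod _) (le_trans _ (ds k)).
      exact: (cmod_le_vnorm_inf (fun j => s k.+1 j - s k j)).
    have [l lJ lu] := geometric_cauchy_lim c01 D0 (fun k => fJ _ _ (sI k j)) df.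
    by exists l.
  exact: fin_all_exists lim_j.
have [Lre LreP] := part_lim _ _ (raddfB _) (@ler_Re_cmod R) (fun z X zX => zX.1).
have [Lim LimP] := part_lim _ _ (raddfB _) (@ler_Im_cmod R) (fun z X zX => zX.2).
exists (fun j => Lre j +i* Lim j)%C => [j|k].
  by split; [exact: (LreP j).1 | exact: (LimP j).1].
apply: vnorm_inf_le => [|j].
  by rewrite mulrn_wge0 // mulr_ge0 ?exprn_ge0 ?divr_ge0 // subr_ge0 ltW.
apply: le_trans (cmod_le_ReIm _) _; rewrite mulr2n raddfB /= raddfB /=.
by apply: lerD; [exact: (LreP j).2 | exact: (LimP j).2].
Qed.

Variable G : ('I_n -> C) -> 'I_n -> C.
Hypothesis GI : forall v, in_civec v I -> in_civec (G v) I.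
Hypothesis G_lipschitz : forall v w, in_civec v I -> in_civec w I ->
  vnorm_inf (fun k => G v k - G w k) <= c * vnorm_inf (fun k => v k - w k).

Lemma contraction_fixpoint_uniq v w :
  in_civec v I -> in_civec w I -> G v = v -> G w = w -> v = w.
Proof.
move=> vI wI Gv Gw; have := G_lipschitz vI wI; rewrite Gv Gw.
have := vnorm_inf_ge0 (fun k => v k - w k); have /andP[_ c1] := c01.
move=> vw0 vwc; have /vnorm_inf_le0 vw : vnorm_inf (fun k => v k - w k) <= 0 by nra.
by apply/funext => k; apply/eqP; rewrite -subr_eq0; have := congr1 (fun u => u k) vw => /= ->.
Qed.

Lemma contraction_fixpoint x0 : in_civec x0 I -> exists2 L, in_civec L I & G L = L.
Proof.
move=> x0I; have /andP[c0 c1] := c01.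
pose s k := iter k G x0; have sI k : in_civec (s k) I by elim: k => //= k; apply: GI.
pose D := vnorm_inf (fun j => s 1%N j - s 0%N j); have D0 : 0 <= D := vnorm_inf_ge0 _.
have ds k : vnorm_inf (fun j => s k.+1 j - s k j) <= D * c ^+ k.
  elim: k => [|k ih]; first by rewrite expr0 mulr1.
  by apply: le_trans (G_lipschitz (sI k.+1) (sI k)) _; rewrite exprS mulrCA ler_wpM2l.
have [L LI Ls] := geometric_cauchy_civec D0 sI ds.
exists L => //; apply/funext => j; apply/eqP; rewrite -subr_eq0; apply/eqP.
suff /vnorm_inf_le0 GL : vnorm_inf (fun k => G L k - L k) <= 0.
  by rewrite (congr1 (fun u => u j) GL).
apply: (geometric_bound_le0 c01 (K := 4 * c * (D / (1 - c)))) => k.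
have -> : (fun i => G L i - L i) = (fun i => (G L i - G (s k) i) + (s k.+1 i - L i)).
  by apply/funext => i; rewrite addrA subrK.
apply: le_trans (vnorm_infD _ _) _; rewrite [X in _ + X]vnorm_infB.
apply: le_trans (lerD (G_lipschitz LI (sI k)) (Ls k.+1)) _.
by have := ler_wpM2l c0 (Ls k); rewrite exprS; lra.
Qed.

End Contraction.

Lemma polyF_conj (R : rcfType) n (P : 'I_n -> {mpoly R[n]}) (z : 'I_n -> R[i]) :
  polyF P (fun k => conjc (z k)) = (fun i => conjc (polyF P z i)).
Proof.
apply/funext => i; rewrite /polyF !mevalE rmorph_sum; apply: eq_bigr => m _.
rewrite rmorphM rmorph_prod mcoeff_map_mpoly; congr (_ * _); first exact/esym/conjc_real.
by apply: eq_bigr => k _; rewrite rmorphXn.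
Qed.

Unset Implicit Arguments.

Theorem corollary4p12 (R : realType) (n : nat) (P : 'I_n -> {mpoly R[n]})
  (bF : civec R n -> civec R n) (bJ : civec R n -> cimat R n) (I : civec R n) :
  is_enclosure (polyF P) bF ->
  is_mat_enclosure (polyJF P) bJ ->
  civec_wf I ->
  (exists (x : 'I_n -> R[i]) (Y : 'M[R[i]]_n),
     [/\ in_civec x I, Y \in unitmx,
         civec_sub (krawczyk bF bJ x Y I) I,
         (exists c, imat_norm_is (msub (mpt 1%:M) (mmmul (mpt Y) (bJ I))) c /\
                    Num.sqrt 2 * c < 1) &
         (forall z, in_civec z (krawczyk bF bJ x Y I) -> in_civec (fun k => conjc (z k)) I)]) ->
  (forall k, 0 < lo (cre (I k))) ->
  exists z : 'I_n -> R[i],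
    [/\ in_civec z I, polyF P z = (fun _ => 0),
        (forall w, in_civec w I -> polyF P w = (fun _ => 0) -> w = z) &
        (forall k, complex.Im (z k) = 0 /\ 0 < complex.Re (z k))].
Proof.
move=> bF_encl bJ_encl _ [x [Y [xI Yunit KI [c [normc sqrt2c]] Kconj]]] Re_pos.
pose G := newton_map (polyF P) Y.
have c01 : 0 <= c < 1.
  have c0 := imat_norm_is_ge0 normc; rewrite c0 /=.
  have sqrt2_ge1 : 1 <= Num.sqrt (2 : R).
    by rewrite -{1}sqrtr1 ler_sqrt // ler1n.
  by have := ler_wpM2r c0 sqrt2_ge1; rewrite mul1r; lra.
have GK v : in_civec v I -> in_civec (G v) (krawczyk bF bJ x Y I).
  exact: newton_map_in_krawczyk.
have GI v : in_civec v I -> in_civec (G v) I by move/GK; apply: KI.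
have G_lip v w := newton_map_lipschitz (v := v) (w := w) bJ_encl normc.
have fix_zero v : G v = v <-> polyF P v = (fun _ => 0) := newton_map_fixE _ v Yunit.
have [z zI /fix_zero Fz] := contraction_fixpoint c01 GI G_lip xI.
have zero_uniq w : in_civec w I -> polyF P w = (fun _ => 0) -> w = z.
  move=> wI /fix_zero Gw.
  exact: (contraction_fixpoint_uniq c01 G_lip wI zI Gw (proj2 (fix_zero z) Fz)).
have z_real : (fun k => conjc (z k)) = z.
  apply: zero_uniq; last by rewrite polyF_conj Fz; apply/funext => k; rewrite conjc0.
  by apply: Kconj; have /fix_zero <- := Fz; apply: GK.
exists z; split => // k; split.
  by have := congr1 (fun u => complex.Im (u k)) z_real; case: (z k) => a b /=; lra.
by case: (zI k) => /andP[Re_lo _] _; apply: lt_le_trans (Re_pos k) Re_lo.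
Qed.
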